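(* Let $C_0,C_1,C_2,\dots$ be the successive configurations of the weakly universal Turing machine WUTM(2,4) (defined in the context) started from a configuration $C_0$ whose tape is a weak tape $\dots w_lw_l\,\alpha_0\,x_0\,\beta_0\,w_rw_r\dots$. Let $M_0$ be a marking of UPN(14,29) that represents $C_0$. Then the run of UPN(14,29) from $M_0$ never halts, and there are indices $0=n_0<n_1<n_2<\cdots$ such that for every $k\ge 0$ the marking reached after $n_k$ firings represents $C_k$ (possibly after the insertion transitions $t_1$ or $t_2$ have fired). Moreover, for fixed $M_0$, $n_k=O(k\cdot 5^{k})$, and every place's marking during the first $n_k$ firings has $O(k)$ base-5 digits (space $O(k)$).
   Context: A deterministic inhibitor Petri net (DIPN) has places $p_1,\dots,p_m$ holding nonnegative integer numbers of tokens (the marking) and transitions $t_1,\dots,t_n$. Each pair (place $p$, transition $t$) carries an input value $w^-\in\{0,1,2,\dots\}\cup\{-1\}$ and an output value $w^+\ge 0$. Transition $t$ is firable iff every place with input value $w^->0$ holds at least $w^-$ tokens and every place with input value $-1$ (inhibitor arc) holds $0$ tokens. At each step the firable transition with the smallest index fires: it removes $w^-$ tokens from each place with $w^->0$ and adds $w^+$ tokens to each place (inhibitor arcs remove nothing). The net halts when no transition is firable. UPN(14,29) has places $p_1=X$, $p_2=U$, $p_3=L$, $p_4=R$, $p_5=\mathit{STEP}$, $p_6=\mathit{MOVE}$, $p_7=\mathit{RIGHT}$, $p_8=\mathit{MOVE1}$, $p_9,\dots,p_{14}$, and 29 transitions. Below, ''$P\,a,b$'' means input value $a$ and output value $b$ for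 place $P$; unlisted places have $0,0$. $t_1$: $L\,{-1},167$; $\mathit{STEP}\,1,1$. $t_2$: $R\,{-1},13596$; $\mathit{STEP}\,1,1$. $t_3$: $X\,4,2$; $U\,1,1$; $\mathit{STEP}\,1,0$; $\mathit{MOVE}\,0,1$; $\mathit{RIGHT}\,0,1$. $t_4$: $X\,4,4$; $\mathit{STEP}\,1,0$; $\mathit{MOVE}\,0,1$. $t_5$: $X\,3,1$; $U\,1,1$; $\mathit{STEP}\,1,0$; $\mathit{MOVE}\,0,1$; $\mathit{RIGHT}\,0,1$. $t_6$: $X\,3,4$; $\mathit{STEP}\,1,0$; $\mathit{MOVE}\,0,1$. $t_7$: $X\,2,3$; $U\,1,1$; $\mathit{STEP}\,1,0$; $\mathit{MOVE}\,0,1$. $t_8$: $X\,2,4$; $U\,0,1$; $\mathit{STEP}\,1,0$; $\mathit{MOVE}\,0,1$. $t_9$: $X\,1,4$; $U\,1,0$; $\mathit{STEP}\,1,0$; $\mathit{MOVE}\,0,1$; $\mathit{RIGHT}\,0,1$. $t_{10}$: $X\,1,3$; $\mathit{STEP}\,1,0$; $\mathit{MOVE}\,0,1$. $t_{11}$: $R\,1,0$; $\mathit{MOVE}\,1,1$; $\mathit{RIGHT}\,{-1},0$; $p_9\,0,5$. $t_{12}$: $L\,1,0$; $\mathit{MOVE}\,1,1$; $\mathit{RIGHT}\,1,1$; $p_9\,0,5$. $t_{13}$: $\mathit{MOVE}\,1,0$; $p_{10}\,0,1$. $t_{14}$: $R\,0,1$; $\mathit{RIGHT}\,{-1},0$;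 $p_9\,1,0$; $p_{10}\,1,1$. $t_{15}$: $L\,0,1$; $\mathit{RIGHT}\,1,1$; $p_9\,1,0$; $p_{10}\,1,1$. $t_{16}$: $p_{10}\,1,0$; $p_{11}\,0,1$. $t_{17}$: $X\,1,0$; $R\,0,1$; $\mathit{RIGHT}\,{-1},0$; $p_{11}\,1,1$. $t_{18}$: $X\,1,0$; $L\,0,1$; $\mathit{RIGHT}\,1,1$; $p_{11}\,1,1$. $t_{19}$: $\mathit{MOVE1}\,0,1$; $p_{11}\,1,0$. $t_{20}$: $R\,5,0$; $\mathit{RIGHT}\,1,1$; $\mathit{MOVE1}\,1,1$; $p_{14}\,0,1$. $t_{21}$: $L\,5,0$; $\mathit{RIGHT}\,{-1},0$; $\mathit{MOVE1}\,1,1$; $p_{14}\,0,1$. $t_{22}$: $\mathit{MOVE1}\,1,0$; $p_{12}\,0,1$. $t_{23}$: $X\,0,1$; $R\,1,0$; $\mathit{RIGHT}\,1,1$; $p_{12}\,1,1$. $t_{24}$: $X\,0,1$; $L\,1,0$; $\mathit{RIGHT}\,{-1},0$; $p_{12}\,1,1$. $t_{25}$: $p_{12}\,1,0$; $p_{13}\,0,1$. $t_{26}$: $R\,0,1$; $\mathit{RIGHT}\,1,1$; $p_{13}\,1,1$; $p_{14}\,1,0$. $t_{27}$: $L\,0,1$; $\mathit{RIGHT}\,{-1},0$; $p_{13}\,1,1$; $p_{14}\,1,0$. $t_{28}$: $\mathit{STEP}\,0,1$; $\mathit{RIGHT}\,1,0$; $p_{13}\,1,0$. $t_{29}$: $\mathit{STEP}\,0,1$;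 $p_{13}\,1,0$. WUTM(2,4) (Neary–Woods) has states $u_1,u_2$ with codes $s(u_1)=0$, $s(u_2)=1$, start state $u_1$, and tape alphabet $\Sigma=\{0,1,\bar 0,\bar 1\}$ with codes $s(0)=1$, $s(1)=2$, $s(\bar0)=3$, $s(\bar1)=4$. Its instructions (scanned symbol, state) $\mapsto$ (written symbol, move, new state) are: $(0,u_1)\mapsto(\bar0,\text{left},u_1)$; $(0,u_2)\mapsto(\bar1,\text{right},u_1)$; $(1,u_1)\mapsto(\bar1,\text{left},u_2)$; $(1,u_2)\mapsto(\bar0,\text{left},u_2)$; $(\bar0,u_1)\mapsto(\bar1,\text{left},u_1)$; $(\bar0,u_2)\mapsto(0,\text{right},u_2)$; $(\bar1,u_1)\mapsto(\bar1,\text{left},u_1)$; $(\bar1,u_2)\mapsto(1,\text{right},u_2)$. It has no halting state (every pair is defined). For a finite word $\alpha=y_1\cdots y_m$ (leftmost $y_1$) set $\lambda(\alpha)=\sum_{i=1}^m s(y_i)5^{m-i}$ and for $\beta=z_1\cdots z_n$ set $\rho(\beta)=\sum_{i=1}^n s(z_i)5^{i-1}$; empty words have code $0$. The blank words are $w_l=0\,0\,\bar0\,1$ (repeated infinitely to the left; $\lambda(w_l)=167$) and $w_r=0\,\bar1\,\bar0\,\bar0\,0\,\bar1$ (repeated infinitely to the right; $\rho(w_r)=13596$). A weak tape is a bi-infinite tape $\dots w_lw_l\,\alpha\,x\,\beta\,w_rw_r\dots$ with $\alpha,\beta$ finite and $x$ the scanned cell. A marking represents the configuration (state $u$, such a tape)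 if, for some such decomposition, $U=s(u)$, $X=s(x)$, $L=\lambda(\alpha)$, $R=\rho(\beta)$, $\mathit{STEP}=1$, and $\mathit{MOVE}=\mathit{RIGHT}=\mathit{MOVE1}=p_9=\dots=p_{14}=0$. *)

From Stdlib Require Import ZArith List Arith Lia Bool.
Import ListNotations.
Open Scope Z_scope.

(* Places are numbered by nat (UPN(14,29) uses places 1..14).
   A marking assigns a number of tokens to each place. *)
Definition marking := nat -> nat.

(* An arc entry (p, w_in, w_out): place p has input value w_in
   (w_in = -1 means inhibitor arc) and output value w_out.
   Places not listed in a transition have input/output value 0,0. *)
Definition arc := (nat * Z * nat)%type.
Definition transition := list arc.

Definition in_val (t : transition) (p : nat) : Z :=
  fold_right (fun (a : arc) acc => let '(q, wi, _) := a in
                if Nat.eqb p q then wi else acc) 0 t.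

Definition out_val (t : transition) (p : nat) : nat :=
  fold_right (fun (a : arc) acc => let '(q, _, wo) := a in
                if Nat.eqb p q then wo else acc) 0%nat t.

Definition firable (M : marking) (t : transition) : bool :=
  forallb (fun (a : arc) => let '(p, wi, _) := a in
     (if 0 <? wi then wi <=? Z.of_nat (M p) else true) &&
     (if wi =? -1 then Nat.eqb (M p) 0 else true)) t.

Definition fire (M : marking) (t : transition) : marking :=
  fun p => (M p - Z.to_nat (Z.max 0 (in_val t p)) + out_val t p)%nat.

(* One step: the firable transition with the smallest index fires;
   None means the net halts (no transition firable). *)
Fixpoint dipn_step (N : list transition) (M : marking) : option marking :=
  match N with
  | [] => None
  | t :: N' => if firable M t then Some (fire M t) else dipn_step N' M
  end.

Fixpoint dipn_run (N : list transition) (M : marking) (n : nat) : option marking :=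
  match n with
  | O => Some M
  | S n' => match dipn_run N M n' with
            | Some M' => dipn_step N M'
            | None => None
            end
  end.

Definition pX := 1%nat.  Definition pU := 2%nat.  Definition pL := 3%nat.
Definition pR := 4%nat.  Definition pSTEP := 5%nat. Definition pMOVE := 6%nat.
Definition pRIGHT := 7%nat. Definition pMOVE1 := 8%nat.
Definition p9 := 9%nat. Definition p10 := 10%nat. Definition p11 := 11%nat.
Definition p12 := 12%nat. Definition p13 := 13%nat. Definition p14 := 14%nat.

Definition UPN : list transition := [
 [(pL, -1, 167%nat); (pSTEP, 1, 1%nat)];
 [(pR, -1, 13596%nat); (pSTEP, 1, 1%nat)];
 [(pX, 4, 2%nat); (pU, 1, 1%nat); (pSTEP, 1, 0%nat); (pMOVE, 0, 1%nat); (pRIGHT, 0, 1%nat)];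
 [(pX, 4, 4%nat); (pSTEP, 1, 0%nat); (pMOVE, 0, 1%nat)];
 [(pX, 3, 1%nat); (pU, 1, 1%nat); (pSTEP, 1, 0%nat); (pMOVE, 0, 1%nat); (pRIGHT, 0, 1%nat)];
 [(pX, 3, 4%nat); (pSTEP, 1, 0%nat); (pMOVE, 0, 1%nat)];
 [(pX, 2, 3%nat); (pU, 1, 1%nat); (pSTEP, 1, 0%nat); (pMOVE, 0, 1%nat)];
 [(pX, 2, 4%nat); (pU, 0, 1%nat); (pSTEP, 1, 0%nat); (pMOVE, 0, 1%nat)];
 [(pX, 1, 4%nat); (pU, 1, 0%nat); (pSTEP, 1, 0%nat); (pMOVE, 0, 1%nat); (pRIGHT, 0, 1%nat)];
 [(pX, 1, 3%nat); (pSTEP, 1, 0%nat); (pMOVE, 0, 1%nat)];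
 [(pR, 1, 0%nat); (pMOVE, 1, 1%nat); (pRIGHT, -1, 0%nat); (p9, 0, 5%nat)];
 [(pL, 1, 0%nat); (pMOVE, 1, 1%nat); (pRIGHT, 1, 1%nat); (p9, 0, 5%nat)];
 [(pMOVE, 1, 0%nat); (p10, 0, 1%nat)];
 [(pR, 0, 1%nat); (pRIGHT, -1, 0%nat); (p9, 1, 0%nat); (p10, 1, 1%nat)];
 [(pL, 0, 1%nat); (pRIGHT, 1, 1%nat); (p9, 1, 0%nat); (p10, 1, 1%nat)];
 [(p10, 1, 0%nat); (p11, 0, 1%nat)];
 [(pX, 1, 0%nat); (pR, 0, 1%nat); (pRIGHT, -1, 0%nat); (p11, 1, 1%nat)];
 [(pX, 1, 0%nat); (pL, 0, 1%nat); (pRIGHT, 1, 1%nat); (p11, 1, 1%nat)];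
 [(pMOVE1, 0, 1%nat); (p11, 1, 0%nat)];
 [(pR, 5, 0%nat); (pRIGHT, 1, 1%nat); (pMOVE1, 1, 1%nat); (p14, 0, 1%nat)];
 [(pL, 5, 0%nat); (pRIGHT, -1, 0%nat); (pMOVE1, 1, 1%nat); (p14, 0, 1%nat)];
 [(pMOVE1, 1, 0%nat); (p12, 0, 1%nat)];
 [(pX, 0, 1%nat); (pR, 1, 0%nat); (pRIGHT, 1, 1%nat); (p12, 1, 1%nat)];
 [(pX, 0, 1%nat); (pL, 1, 0%nat); (pRIGHT, -1, 0%nat); (p12, 1, 1%nat)];
 [(p12, 1, 0%nat); (p13, 0, 1%nat)];
 [(pR, 0, 1%nat); (pRIGHT, 1, 1%nat); (p13, 1, 1%nat); (p14, 1, 0%nat)];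
 [(pL, 0, 1%nat); (pRIGHT, -1, 0%nat); (p13, 1, 1%nat); (p14, 1, 0%nat)];
 [(pSTEP, 0, 1%nat); (pRIGHT, 1, 0%nat); (p13, 1, 0%nat)];
 [(pSTEP, 0, 1%nat); (p13, 1, 0%nat)]
].

Inductive sym := S0 | S1 | S0b | S1b.
Inductive state := u1 | u2.
Inductive dir := Left | Right.

Definition sym_code (a : sym) : nat :=
  match a with S0 => 1 | S1 => 2 | S0b => 3 | S1b => 4 end.
Definition state_code (u : state) : nat :=
  match u with u1 => 0 | u2 => 1 end.

Definition delta (a : sym) (u : state) : sym * dir * state :=
  match a, u with
  | S0, u1 => (S0b, Left, u1)
  | S0, u2 => (S1b, Right, u1)
  | S1, u1 => (S1b, Left, u2)
  | S1, u2 => (S0b, Left, u2)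
  | S0b, u1 => (S1b, Left, u1)
  | S0b, u2 => (S0, Right, u2)
  | S1b, u1 => (S1b, Left, u1)
  | S1b, u2 => (S1, Right, u2)
  end.

Record config := mkConfig { cstate : state; ctape : Z -> sym; chead : Z }.

Definition tm_step (c : config) : config :=
  let '(w, d, u') := delta (ctape c (chead c)) (cstate c) in
  let T' := fun z => if Z.eqb z (chead c) then w else ctape c z in
  let h' := match d with Left => chead c - 1 | Right => chead c + 1 end in
  mkConfig u' T' h'.

Definition tm_iter (k : nat) (c : config) : config := Nat.iter k tm_step c.

Definition wl : list sym := [S0; S0; S0b; S1].
Definition wr : list sym := [S0; S1b; S0b; S0b; S0; S1b].

(* lambda(y_1..y_m) = sum s(y_i) 5^(m-i);  rho(z_1..z_n) = sum s(z_i) 5^(i-1). *)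
Definition lam (al : list sym) : nat :=
  fold_left (fun acc y => 5 * acc + sym_code y)%nat al 0%nat.
Definition rho (be : list sym) : nat :=
  fold_right (fun z acc => sym_code z + 5 * acc)%nat 0%nat be.

(* The tape T with head at h is ... w_l w_l alpha x beta w_r w_r ... *)
Definition weak_decomp (T : Z -> sym) (h : Z) (al : list sym) (x : sym)
    (be : list sym) : Prop :=
  T h = x /\
  (forall i : nat, (i < length al)%nat ->
       T (h - Z.of_nat (S i)) = nth (length al - 1 - i) al S0) /\
  (forall j : nat,
       T (h - Z.of_nat (length al) - Z.of_nat (S j)) = nth (3 - j mod 4) wl S0) /\
  (forall i : nat, (i < length be)%nat ->
       T (h + Z.of_nat (S i)) = nth i be S0) /\
  (forall j : nat,
       T (h + Z.of_nat (length be) + Z.of_nat (S j)) = nth (j mod 6) wr S0).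

Definition represents (M : marking) (c : config) : Prop :=
  exists (al be : list sym),
    weak_decomp (ctape c) (chead c) al (ctape c (chead c)) be /\
    M pU = state_code (cstate c) /\
    M pX = sym_code (ctape c (chead c)) /\
    M pL = lam al /\
    M pR = rho be /\
    M pSTEP = 1%nat /\
    (forall p : nat, (6 <= p <= 14)%nat -> M p = 0%nat).

(* A marking stores the tape as two base-5 numbers: L for
   the word left of the head, R for the word right of it, nearest digit least
   significant.  One machine step is simulated by a cycle of firings:
   insertion (t1/t2 append a blank word w_l/w_r when L/R is 0), writing (one of
   t3..t10 applies delta) and moving (t11..t29 push the written symbol onto one
   side and pop the nearest digit of the other).  Iterating it with dependent choice
   gives the times n_k and the time and space bounds of theorem1. *)

From Stdlib Require Import ZArith List Lia Bool.
From Stdlib Require Import FunctionalExtensionality Classical IndefiniteDescription.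
Import ListNotations.
Local Open Scope nat_scope.

Lemma run_add N M a b : dipn_run N M (a + b) =
  match dipn_run N M a with Some M' => dipn_run N M' b | None => None end.
Proof.
  induction b as [|b IH].
  - rewrite Nat.add_0_r. now destruct (dipn_run N M a).
  - rewrite Nat.add_succ_r. simpl. rewrite IH. now destruct (dipn_run N M a).
Qed.

Lemma run_defined_prefix N M a b :
  dipn_run N M (a + b) <> None -> dipn_run N M a <> None.
Proof. rewrite run_add. intros H E. rewrite E in H. auto. Qed.

Definition bounded (B : nat) (M : marking) : Prop :=
  forall p, 1 <= p <= 14 -> M p < B.

Definition reach (B : nat) (M : marking) (m : nat) (M' : marking) : Prop :=
  dipn_run UPN M m = Some M' /\
  forall j M'', j <= m -> dipn_run UPN M j = Some M'' -> bounded B M''.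

Lemma reach_refl B M : bounded B M -> reach B M 0 M.
Proof.
  intros HB. split; [reflexivity|]. intros j M'' Hj Hr.
  replace j with 0 in Hr by lia. now injection Hr as <-.
Qed.

Lemma reach_trans B M m1 M1 m2 M2 :
  reach B M m1 M1 -> reach B M1 m2 M2 -> reach B M (m1 + m2) M2.
Proof.
  intros [H1 B1] [H2 B2]. split.
  - now rewrite run_add, H1.
  - intros j M'' Hj Hr. destruct (le_lt_dec j m1) as [Hle|Hlt].
    + exact (B1 j M'' Hle Hr).
    + replace j with (m1 + (j - m1)) in Hr by lia. rewrite run_add, H1 in Hr.
      apply (B2 (j - m1)); [lia | exact Hr].
Qed.

Lemma reach_cons B M M1 m M2 :
  dipn_step UPN M = Some M1 -> bounded B M -> reach B M1 m M2 -> reach B M (S m) M2.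
Proof.
  intros Hs HB Hr. apply (reach_trans B M 1 M1 m M2); [|exact Hr]. split.
  - exact Hs.
  - intros [|j] M'' Hj Hr'.
    + now injection Hr' as <-.
    + replace j with 0 in Hr' by lia. change (dipn_step UPN M = Some M'') in Hr'.
      rewrite Hs in Hr'. injection Hr' as <-.
      destruct Hr as [_ Hb]. apply (Hb 0); [lia | reflexivity].
Qed.

Lemma reach_mono B B' M m M' : B <= B' -> reach B M m M' -> reach B' M m M'.
Proof.
  intros HBB' [Hr Hb]. split; [exact Hr|].
  intros j M'' Hj Hj' p Hp. specialize (Hb j M'' Hj Hj' p Hp). lia.
Qed.

Lemma reach_eq B M m M' m' M'' : reach B M m M' -> m = m' -> M' = M'' -> reach B M m' M''.
Proof. now intros H <- <-. Qed.

(* A loop: if each firing moves F (S k) a to F k (a + c), then n firings move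
   F n acc to F 0 (acc + c * n).  This is how the net copies, multiplies and
   divides counters token by token. *)
Lemma reach_loop B c (F : nat -> nat -> marking) n acc :
  (forall k a, dipn_step UPN (F (S k) a) = Some (F k (a + c))) ->
  (forall k a, k <= n -> a <= acc + c * n -> bounded B (F k a)) ->
  reach B (F n acc) n (F 0 (acc + c * n)).
Proof.
  intros Hstep. revert acc. induction n as [|n IH]; intros acc HB.
  - rewrite Nat.mul_0_r, Nat.add_0_r. apply reach_refl, HB; lia.
  - apply (reach_cons B _ (F n (acc + c))); [apply Hstep | apply HB; lia |].
    replace (acc + c * S n) with (acc + c + c * n) by lia.
    apply IH. intros k a Hk Ha. apply HB; lia.
Qed.

Definition mk (x u l r st mv rt m1 a9 a10 a11 a12 a13 a14 : nat) (rest : marking) : marking :=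
  fun p => match p with
  | 1 => x | 2 => u | 3 => l | 4 => r | 5 => st | 6 => mv | 7 => rt | 8 => m1
  | 9 => a9 | 10 => a10 | 11 => a11 | 12 => a12 | 13 => a13 | 14 => a14 | _ => rest p end.

(* The value of place RIGHT while the head moves in direction d. *)
Definition rflag (d : dir) : nat := match d with Left => 0 | Right => 1 end.

(* The marking seen from the direction d of the move: src is the side the head
   moves into (L for Left, R for Right), dst the side that receives the
   written symbol. *)
Definition mkm (d : dir) x u src dst st mv rt m1 a9 a10 a11 a12 a13 a14 rest : marking :=
  match d with
  | Left => mk x u src dst st mv rt m1 a9 a10 a11 a12 a13 a14 rest
  | Right => mk x u dst src st mv rt m1 a9 a10 a11 a12 a13 a14 rest
  end.

Lemma bounded_mk B x u l r st mv rt m1 a9 a10 a11 a12 a13 a14 rest :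
  x < B -> u < B -> l < B -> r < B -> st < B -> mv < B -> rt < B -> m1 < B ->
  a9 < B -> a10 < B -> a11 < B -> a12 < B -> a13 < B -> a14 < B ->
  bounded B (mk x u l r st mv rt m1 a9 a10 a11 a12 a13 a14 rest).
Proof. intros. intros p Hp. do 15 (destruct p as [|p]; [simpl; lia|]). lia. Qed.

Lemma bounded_mkm B d x u src dst st mv rt m1 a9 a10 a11 a12 a13 a14 rest :
  x < B -> u < B -> src < B -> dst < B -> st < B -> mv < B -> rt < B -> m1 < B ->
  a9 < B -> a10 < B -> a11 < B -> a12 < B -> a13 < B -> a14 < B ->
  bounded B (mkm d x u src dst st mv rt m1 a9 a10 a11 a12 a13 a14 rest).
Proof. intros. destruct d; now apply bounded_mk. Qed.

Ltac bnd :=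
  first [apply bounded_mkm | apply bounded_mk];
  try match goal with |- rflag ?d < _ => destruct d end; cbn [rflag]; lia.

(* Firability with the thresholds compared in nat, which evaluates on markings
   whose entries are symbolic successors. *)
Definition firable_nat (M : marking) (t : transition) : bool :=
  forallb (fun (a : arc) => let '(p, wi, _) := a in
     (if (0 <? wi)%Z then Nat.leb (Z.to_nat wi) (M p) else true) &&
     (if (wi =? -1)%Z then Nat.eqb (M p) 0 else true)) t.

Lemma firable_nat_eq M t : firable M t = firable_nat M t.
Proof.
  unfold firable, firable_nat. induction t as [|[[p wi] wo] t IH]; simpl; [reflexivity|].
  rewrite IH. do 2 f_equal.
  destruct (0 <? wi)%Z eqn:E; [apply Z.ltb_lt in E | reflexivity].
  destruct (wi <=? Z.of_nat (M p))%Z eqn:E1; destruct (Nat.leb (Z.to_nat wi) (M p)) eqn:E2; auto;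
    [apply Z.leb_le in E1; apply Nat.leb_gt in E2 | apply Z.leb_gt in E1; apply Nat.leb_le in E2];
    lia.
Qed.

Fixpoint step_nat (N : list transition) (M : marking) : option marking :=
  match N with
  | [] => None
  | t :: N' => if firable_nat M t then Some (fire M t) else step_nat N' M
  end.

Lemma step_nat_eq N M : dipn_step N M = step_nat N M.
Proof. induction N as [|t N IH]; simpl; [reflexivity|]. now rewrite firable_nat_eq, IH. Qed.

Arguments fire : simpl never.

Ltac step_tac :=
  rewrite step_nat_eq; unfold UPN;
  repeat (progress (simpl; rewrite ?andb_false_r));
  apply (f_equal Some); unfold fire; apply functional_extensionality; intros p;
  do 15 (destruct p as [|p]; [simpl; lia|]); simpl; lia.

(* t1 appends a copy of w_l (code 167) when the left word is empty. *)
Lemma step_t1 x u r rest :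
  dipn_step UPN (mk x u 0 r 1 0 0 0 0 0 0 0 0 0 rest) =
  Some (mk x u 167 r 1 0 0 0 0 0 0 0 0 0 rest).
Proof. step_tac. Qed.

(* t2 appends a copy of w_r (code 13596) when the right word is empty. *)
Lemma step_t2 x u l rest : 1 <= l ->
  dipn_step UPN (mk x u l 0 1 0 0 0 0 0 0 0 0 0 rest) =
  Some (mk x u l 13596 1 0 0 0 0 0 0 0 0 0 rest).
Proof. intros; destruct l; [lia|]. step_tac. Qed.

(* Once both words are nonempty, t3..t10 carry out the instruction delta a u:
   write w, change to state u', and record the direction in RIGHT. *)
Lemma step_write a u w d u' l r rest : delta a u = (w, d, u') -> 1 <= l -> 1 <= r ->
  dipn_step UPN (mk (sym_code a) (state_code u) l r 1 0 0 0 0 0 0 0 0 0 rest) =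
  Some (mk (sym_code w) (state_code u') l r 0 1 (rflag d) 0 0 0 0 0 0 0 rest).
Proof.
  intros Hd Hl Hr. destruct l as [|l]; [lia|]. destruct r as [|r]; [lia|].
  destruct a, u; injection Hd as <- <- <-; step_tac.
Qed.

(** * The moving phase *)

(* In direction d the net replaces (src, dst) = (s + 5 q, dst) by
   (q, x + 5 dst) and sets X to the digit s: the written symbol x is pushed onto
   the dst side and the nearest digit s of the src side is popped into X. *)
Section MovePhase.
Variables (B : nat) (d : dir) (u : nat) (rest : marking).

Lemma loop_dst_to_p9 x src n a : x + u + src + a + 5 * n + 2 < B ->
  reach B (mkm d x u src n 0 1 (rflag d) 0 a 0 0 0 0 0 rest) n
          (mkm d x u src 0 0 1 (rflag d) 0 (a + 5 * n) 0 0 0 0 0 rest).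
Proof.
  intros HB. apply (reach_loop B 5 (fun k b => mkm d x u src k 0 1 (rflag d) 0 b 0 0 0 0 0 rest)).
  - intros k b. destruct d; step_tac.
  - intros k b Hk Hb. bnd.
Qed.

Lemma step_t13 x src a :
  dipn_step UPN (mkm d x u src 0 0 1 (rflag d) 0 a 0 0 0 0 0 rest) =
  Some (mkm d x u src 0 0 0 (rflag d) 0 a 1 0 0 0 0 rest).
Proof. destruct d; step_tac. Qed.

Lemma loop_p9_to_dst x src n a : x + u + src + a + n + 2 < B ->
  reach B (mkm d x u src a 0 0 (rflag d) 0 n 1 0 0 0 0 rest) n
          (mkm d x u src (a + 1 * n) 0 0 (rflag d) 0 0 1 0 0 0 0 rest).
Proof.
  intros HB. apply (reach_loop B 1 (fun k b => mkm d x u src b 0 0 (rflag d) 0 k 1 0 0 0 0 rest)).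
  - intros k b. destruct d; step_tac.
  - intros k b Hk Hb. bnd.
Qed.

Lemma step_t16 x src a :
  dipn_step UPN (mkm d x u src a 0 0 (rflag d) 0 0 1 0 0 0 0 rest) =
  Some (mkm d x u src a 0 0 (rflag d) 0 0 0 1 0 0 0 rest).
Proof. destruct d; step_tac. Qed.

Lemma loop_x_to_dst src n a : u + src + a + n + 2 < B ->
  reach B (mkm d n u src a 0 0 (rflag d) 0 0 0 1 0 0 0 rest) n
          (mkm d 0 u src (a + 1 * n) 0 0 (rflag d) 0 0 0 1 0 0 0 rest).
Proof.
  intros HB. apply (reach_loop B 1 (fun k b => mkm d k u src b 0 0 (rflag d) 0 0 0 1 0 0 0 rest)).
  - intros k b. destruct d; step_tac.
  - intros k b Hk Hb. bnd.
Qed.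

Lemma step_t19 src dst :
  dipn_step UPN (mkm d 0 u src dst 0 0 (rflag d) 0 0 0 1 0 0 0 rest) =
  Some (mkm d 0 u src dst 0 0 (rflag d) 1 0 0 0 0 0 0 rest).
Proof. destruct d; step_tac. Qed.

Lemma loop_div5_src s dst n a : u + 5 * n + s + dst + a + n + 2 < B ->
  reach B (mkm d 0 u (s + 5 * n) dst 0 0 (rflag d) 1 0 0 0 0 0 a rest) n
          (mkm d 0 u (s + 5 * 0) dst 0 0 (rflag d) 1 0 0 0 0 0 (a + 1 * n) rest).
Proof.
  intros HB.
  apply (reach_loop B 1 (fun k b => mkm d 0 u (s + 5 * k) dst 0 0 (rflag d) 1 0 0 0 0 0 b rest)).
  - intros k b. cbv beta. replace (s + 5 * S k) with (5 + (s + 5 * k)) by lia. destruct d; step_tac.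
  - intros k b Hk Hb. bnd.
Qed.

Lemma step_t22 s dst a : s < 5 ->
  dipn_step UPN (mkm d 0 u s dst 0 0 (rflag d) 1 0 0 0 0 0 a rest) =
  Some (mkm d 0 u s dst 0 0 (rflag d) 0 0 0 0 1 0 a rest).
Proof. intros Hs. destruct s as [|[|[|[|[|s]]]]]; try lia; destruct d; step_tac. Qed.

Lemma loop_src_to_x dst q n a : u + n + a + dst + q + 2 < B ->
  reach B (mkm d a u n dst 0 0 (rflag d) 0 0 0 0 1 0 q rest) n
          (mkm d (a + 1 * n) u 0 dst 0 0 (rflag d) 0 0 0 0 1 0 q rest).
Proof.
  intros HB. apply (reach_loop B 1 (fun k b => mkm d b u k dst 0 0 (rflag d) 0 0 0 0 1 0 q rest)).
  - intros k b. destruct d; step_tac.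
  - intros k b Hk Hb. bnd.
Qed.

Lemma step_t25 x dst a :
  dipn_step UPN (mkm d x u 0 dst 0 0 (rflag d) 0 0 0 0 1 0 a rest) =
  Some (mkm d x u 0 dst 0 0 (rflag d) 0 0 0 0 0 1 a rest).
Proof. destruct d; step_tac. Qed.

Lemma loop_p14_to_src x dst n a : x + u + a + dst + n + 2 < B ->
  reach B (mkm d x u a dst 0 0 (rflag d) 0 0 0 0 0 1 n rest) n
          (mkm d x u (a + 1 * n) dst 0 0 (rflag d) 0 0 0 0 0 1 0 rest).
Proof.
  intros HB. apply (reach_loop B 1 (fun k b => mkm d x u b dst 0 0 (rflag d) 0 0 0 0 0 1 k rest)).
  - intros k b. destruct d; step_tac.
  - intros k b Hk Hb. bnd.
Qed.

Lemma step_t28_29 x src dst :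
  dipn_step UPN (mkm d x u src dst 0 0 (rflag d) 0 0 0 0 0 1 0 rest) =
  Some (mkm d x u src dst 1 0 0 0 0 0 0 0 0 0 rest).
Proof. destruct d; step_tac. Qed.

Lemma move_phase x q s dst : 1 <= s < 5 -> x + u + 6 * q + s + 5 * dst + 2 < B ->
  reach B (mkm d x u (s + 5 * q) dst 0 1 (rflag d) 0 0 0 0 0 0 0 rest)
    (6 * dst + x + 2 * q + s + 6)
    (mkm d s u q (x + 5 * dst) 1 0 0 0 0 0 0 0 0 0 rest).
Proof.
  intros Hs HB. eapply reach_eq.
  - eapply reach_trans; [apply loop_dst_to_p9; lia|].
    eapply reach_cons; [apply step_t13 | bnd |].
    eapply reach_trans; [apply loop_p9_to_dst; lia|].
    eapply reach_cons; [apply step_t16 | bnd |].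
    eapply reach_trans; [apply loop_x_to_dst; lia|].
    eapply reach_cons; [apply step_t19 | bnd |].
    eapply reach_trans; [apply loop_div5_src; lia|].
    eapply reach_cons; [apply step_t22; lia | bnd |].
    eapply reach_trans; [apply loop_src_to_x; lia|].
    eapply reach_cons; [apply step_t25 | bnd |].
    eapply reach_trans; [apply loop_p14_to_src; lia|].
    eapply reach_cons; [apply step_t28_29 | bnd |].
    apply reach_refl; bnd.
  - lia.
  - f_equal; lia.
Qed.

End MovePhase.

(** * Codes of words and weak tapes *)

Lemma sym_code_range a : 1 <= sym_code a <= 4.
Proof. destruct a; simpl; lia. Qed.

Lemma state_code_le u : state_code u <= 1.
Proof. destruct u; simpl; lia. Qed.

(* The digit nearest to the head is the least significant one on both sides. *)
Lemma lam_snoc al y : lam (al ++ [y]) = sym_code y + 5 * lam al.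
Proof. unfold lam. rewrite fold_left_app. simpl. lia. Qed.

Lemma rho_cons z be : rho (z :: be) = sym_code z + 5 * rho be.
Proof. reflexivity. Qed.

Lemma lam_lt al : lam al < 5 ^ length al.
Proof.
  induction al as [|y al IH] using rev_ind; [cbv; lia|].
  rewrite lam_snoc, length_app, Nat.pow_add_r. simpl (5 ^ length [y]).
  pose proof (sym_code_range y). lia.
Qed.

Lemma rho_lt be : rho be < 5 ^ length be.
Proof.
  induction be as [|z be IH]; [simpl; lia|].
  rewrite rho_cons. simpl. pose proof (sym_code_range z). lia.
Qed.

(* Since every symbol has a nonzero code, a nonempty word has a nonzero code;
   hence t1, which tests L = 0 by an inhibitor arc, is disabled after insertion. *)
Lemma lam_pos al : al <> [] -> 1 <= lam al.
Proof.
  intros H. destruct (exists_last H) as (al' & y & ->). rewrite lam_snoc.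
  pose proof (sym_code_range y). lia.
Qed.

Lemma pow5_le a b : a <= b -> 5 ^ a <= 5 ^ b.
Proof. intros; apply Nat.pow_le_mono_r; lia. Qed.

Definition wupd (T : Z -> sym) (h : Z) (w : sym) : Z -> sym :=
  fun z => if Z.eqb z h then w else T z.

Lemma weak_decomp_unfold_wl T h x be :
  weak_decomp T h [] x be -> weak_decomp T h wl x be.
Proof.
  intros (Hx & _ & Hl & Hb & Hr). repeat split; auto.
  - intros i Hi. simpl in Hi. specialize (Hl i). simpl length in Hl.
    replace (h - Z.of_nat 0 - Z.of_nat (S i))%Z with (h - Z.of_nat (S i))%Z in Hl by lia.
    rewrite Hl, Nat.mod_small by lia. reflexivity.
  - intros j. specialize (Hl (j + 4)). simpl length in *.
    replace (h - Z.of_nat 0 - Z.of_nat (S (j + 4)))%Z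
      with (h - Z.of_nat 4 - Z.of_nat (S j))%Z in Hl by lia.
    rewrite Hl, <- Nat.Div0.add_mod_idemp_r, Nat.Div0.mod_same, Nat.add_0_r. reflexivity.
Qed.

Lemma weak_decomp_unfold_wr T h al x :
  weak_decomp T h al x [] -> weak_decomp T h al x wr.
Proof.
  intros (Hx & Ha & Hl & _ & Hr). repeat split; auto.
  - intros i Hi. simpl in Hi. specialize (Hr i). simpl length in Hr.
    replace (h + Z.of_nat 0 + Z.of_nat (S i))%Z with (h + Z.of_nat (S i))%Z in Hr by lia.
    rewrite Hr, Nat.mod_small by lia. reflexivity.
  - intros j. specialize (Hr (j + 6)). simpl length in *.
    replace (h + Z.of_nat 0 + Z.of_nat (S (j + 6)))%Z
      with (h + Z.of_nat 6 + Z.of_nat (S j))%Z in Hr by lia.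
    rewrite Hr, <- Nat.Div0.add_mod_idemp_r, Nat.Div0.mod_same, Nat.add_0_r. reflexivity.
Qed.

Lemma weak_decomp_left T h al y x be w :
  weak_decomp T h (al ++ [y]) x be -> weak_decomp (wupd T h w) (h - 1) al y (w :: be).
Proof.
  intros (Hx & Ha & Hl & Hb & Hr). rewrite length_app in *. simpl length in *.
  unfold wupd. repeat split.
  - rewrite (proj2 (Z.eqb_neq _ _)) by lia. specialize (Ha 0 ltac:(lia)).
    replace (h - Z.of_nat 1)%Z with (h - 1)%Z in Ha by lia. rewrite Ha.
    rewrite app_nth2 by lia. now replace (length al + 1 - 1 - 0 - length al) with 0 by lia.
  - intros i Hi. rewrite (proj2 (Z.eqb_neq _ _)) by lia. specialize (Ha (S i) ltac:(lia)).
    replace (h - 1 - Z.of_nat (S i))%Z with (h - Z.of_nat (S (S i)))%Z by lia. rewrite Ha.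
    rewrite app_nth1 by lia. f_equal. lia.
  - intros j. rewrite (proj2 (Z.eqb_neq _ _)) by lia. specialize (Hl j).
    now replace (h - 1 - Z.of_nat (length al) - Z.of_nat (S j))%Z
      with (h - Z.of_nat (length al + 1) - Z.of_nat (S j))%Z by lia.
  - intros [|i] Hi.
    + now rewrite (proj2 (Z.eqb_eq _ _)) by lia.
    + rewrite (proj2 (Z.eqb_neq _ _)) by lia. simpl in Hi. specialize (Hb i ltac:(lia)).
      now replace (h - 1 + Z.of_nat (S (S i)))%Z with (h + Z.of_nat (S i))%Z by lia.
  - intros j. simpl length. rewrite (proj2 (Z.eqb_neq _ _)) by lia. specialize (Hr j).
    now replace (h - 1 + Z.of_nat (S (length be)) + Z.of_nat (S j))%Z
      with (h + Z.of_nat (length be) + Z.of_nat (S j))%Z by lia.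
Qed.

Lemma weak_decomp_right T h al z x be w :
  weak_decomp T h al x (z :: be) -> weak_decomp (wupd T h w) (h + 1) (al ++ [w]) z be.
Proof.
  intros (Hx & Ha & Hl & Hb & Hr). simpl length in *.
  unfold wupd, weak_decomp. rewrite length_app. simpl length. repeat split.
  - rewrite (proj2 (Z.eqb_neq _ _)) by lia. specialize (Hb 0 ltac:(lia)).
    now replace (h + Z.of_nat 1)%Z with (h + 1)%Z in Hb by lia.
  - intros [|i] Hi.
    + rewrite (proj2 (Z.eqb_eq _ _)) by lia. rewrite app_nth2 by lia.
      now replace (length al + 1 - 1 - 0 - length al) with 0 by lia.
    + rewrite (proj2 (Z.eqb_neq _ _)) by lia. specialize (Ha i ltac:(lia)).
      replace (h + 1 - Z.of_nat (S (S i)))%Z with (h - Z.of_nat (S i))%Z by lia. rewrite Ha.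
      rewrite app_nth1 by lia. f_equal. lia.
  - intros j. rewrite (proj2 (Z.eqb_neq _ _)) by lia. specialize (Hl j).
    now replace (h + 1 - Z.of_nat (length al + 1) - Z.of_nat (S j))%Z
      with (h - Z.of_nat (length al) - Z.of_nat (S j))%Z by lia.
  - intros i Hi. rewrite (proj2 (Z.eqb_neq _ _)) by lia. specialize (Hb (S i) ltac:(lia)).
    now replace (h + 1 + Z.of_nat (S i))%Z with (h + Z.of_nat (S (S i)))%Z by lia.
  - intros j. rewrite (proj2 (Z.eqb_neq _ _)) by lia. specialize (Hr j).
    now replace (h + 1 + Z.of_nat (length be) + Z.of_nat (S j))%Z
      with (h + Z.of_nat (S (length be)) + Z.of_nat (S j))%Z by lia.
Qed.

Lemma tm_step_eq u T h w d u' : delta (T h) u = (w, d, u') ->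
  tm_step (mkConfig u T h) =
  mkConfig u' (wupd T h w) (match d with Left => h - 1 | Right => h + 1 end)%Z.
Proof. intros Hd. unfold tm_step. simpl. now rewrite Hd. Qed.

(** * One machine step *)

Definition represents_with (M : marking) (c : config) (al be : list sym) : Prop :=
  weak_decomp (ctape c) (chead c) al (ctape c (chead c)) be /\
  M pU = state_code (cstate c) /\
  M pX = sym_code (ctape c (chead c)) /\
  M pL = lam al /\
  M pR = rho be /\
  M pSTEP = 1 /\
  (forall p : nat, 6 <= p <= 14 -> M p = 0).

Lemma represents_with_mk M c al be : represents_with M c al be ->
  M = mk (sym_code (ctape c (chead c))) (state_code (cstate c)) (lam al) (rho be)
         1 0 0 0 0 0 0 0 0 0 M.
Proof.
  intros (_ & HU & HX & HL & HR & HS & H0). apply functional_extensionality; intros p.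
  do 6 (destruct p as [|p]; [simpl; auto|]).
  do 9 (destruct p as [|p]; [simpl; apply H0; lia|]). reflexivity.
Qed.

Lemma represents_with_intro u T h al x be rest : weak_decomp T h al x be ->
  represents_with (mk (sym_code x) (state_code u) (lam al) (rho be) 1 0 0 0 0 0 0 0 0 0 rest)
                  (mkConfig u T h) al be.
Proof.
  intros Hw. pose proof Hw as (Hx & _). simpl. subst x.
  split; [exact Hw|]. repeat split; auto. intros p Hp.
  do 6 (destruct p as [|p]; [lia|]). do 9 (destruct p as [|p]; [reflexivity|]). lia.
Qed.

(* The size of the tape description, never below the length 6 of w_r. *)
Definition tape_size (al be : list sym) : nat := Nat.max (length al) (Nat.max (length be) 6).

Lemma represents_with_bounded M c al be :
  represents_with M c al be -> bounded (5 ^ tape_size al be) M.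
Proof.
  intros HR. rewrite (represents_with_mk _ _ _ _ HR).
  assert (H56 : 5 ^ 6 <= 5 ^ tape_size al be) by (apply pow5_le; unfold tape_size; lia).
  assert (Hal : 5 ^ length al <= 5 ^ tape_size al be) by (apply pow5_le; unfold tape_size; lia).
  assert (Hbe : 5 ^ length be <= 5 ^ tape_size al be) by (apply pow5_le; unfold tape_size; lia).
  pose proof (lam_lt al). pose proof (rho_lt be).
  pose proof (sym_code_range (ctape c (chead c))). pose proof (state_code_le (cstate c)).
  simpl (5 ^ 6) in H56. bnd.
Qed.

Lemma insert_left B T h al be X U R rest :
  weak_decomp T h al (T h) be -> X < B -> U < B -> lam al < B -> R < B -> 167 < B ->
  exists i al1, i <= 1 /\ al1 <> [] /\ length al1 <= Nat.max (length al) 4 /\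
    weak_decomp T h al1 (T h) be /\
    reach B (mk X U (lam al) R 1 0 0 0 0 0 0 0 0 0 rest) i
            (mk X U (lam al1) R 1 0 0 0 0 0 0 0 0 0 rest).
Proof.
  intros Hw HX HU HL HR H167. destruct al as [|a al].
  - exists 1, wl. split; [lia|]. split; [discriminate|]. split; [simpl; lia|].
    split; [now apply weak_decomp_unfold_wl|].
    change (lam []) with 0. change (lam wl) with 167.
    eapply reach_cons; [apply step_t1 | bnd | apply reach_refl; bnd].
  - exists 0, (a :: al). split; [lia|]. split; [discriminate|]. split; [lia|].
    split; [exact Hw|]. apply reach_refl; bnd.
Qed.

(* Insertion on the right: once alpha is nonempty (so t1 is disabled), at most
   one firing of t2 makes beta nonempty. *)
Lemma insert_right B T h al be X U L rest :
  weak_decomp T h al (T h) be -> 1 <= L -> X < B -> U < B -> L < B -> rho be < B -> 13596 < B ->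
  exists j be1, j <= 1 /\ be1 <> [] /\ length be1 <= Nat.max (length be) 6 /\
    weak_decomp T h al (T h) be1 /\
    reach B (mk X U L (rho be) 1 0 0 0 0 0 0 0 0 0 rest) j
            (mk X U L (rho be1) 1 0 0 0 0 0 0 0 0 0 rest).
Proof.
  intros Hw HL1 HX HU HL HR H13596. destruct be as [|b be].
  - exists 1, wr. split; [lia|]. split; [discriminate|]. split; [simpl; lia|].
    split; [now apply weak_decomp_unfold_wr|].
    change (rho []) with 0. replace (rho wr) with 13596 by reflexivity.
    eapply reach_cons; [apply step_t2; lia | bnd | apply reach_refl; bnd].
  - exists 0, (b :: be). split; [lia|]. split; [discriminate|]. split; [lia|].
    split; [exact Hw|]. apply reach_refl; bnd.
Qed.

Lemma write_move_step B u T h al y z be rest :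
  weak_decomp T h (al ++ [y]) (T h) (z :: be) ->
  6 * (lam (al ++ [y]) + rho (z :: be)) + 7 < B ->
  exists m M' al' be',
    1 <= m <= 6 * (lam (al ++ [y]) + rho (z :: be)) + 11 /\
    reach B (mk (sym_code (T h)) (state_code u) (lam (al ++ [y])) (rho (z :: be))
                1 0 0 0 0 0 0 0 0 0 rest) m M' /\
    represents_with M' (tm_step (mkConfig u T h)) al' be' /\
    length al' <= S (length (al ++ [y])) /\ length be' <= S (length (z :: be)).
Proof.
  intros Hw HB. destruct (delta (T h) u) as [[w d] u'] eqn:Hd.
  pose proof (step_write _ _ _ _ _ (lam (al ++ [y])) (rho (z :: be)) rest Hd) as Hwrite.
  rewrite (tm_step_eq _ _ _ _ _ _ Hd).
  pose proof (sym_code_range (T h)). pose proof (sym_code_range w).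
  pose proof (sym_code_range y). pose proof (sym_code_range z).
  pose proof (state_code_le u). pose proof (state_code_le u').
  rewrite lam_snoc, rho_cons in HB, Hwrite |- *. destruct d.
  - exists (S (6 * rho (z :: be) + sym_code w + 2 * lam al + sym_code y + 6)),
      (mk (sym_code y) (state_code u') (lam al) (rho (w :: z :: be)) 1 0 0 0 0 0 0 0 0 0 rest),
      al, (w :: z :: be).
    split; [rewrite rho_cons; lia|]. split.
    + eapply reach_cons; [apply Hwrite; lia | bnd |].
      apply (move_phase _ Left); rewrite ?rho_cons; lia.
    + split; [apply (represents_with_intro _ _ _ _ y), (weak_decomp_left _ _ _ _ _ _ _ Hw)|].
      rewrite length_app; simpl; lia.
  - exists (S (6 * lam (al ++ [y]) + sym_code w + 2 * rho be + sym_code z + 6)),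
      (mk (sym_code z) (state_code u') (lam ((al ++ [y]) ++ [w])) (rho be)
          1 0 0 0 0 0 0 0 0 0 rest),
      ((al ++ [y]) ++ [w]), be.
    split; [rewrite !lam_snoc; lia|]. split.
    + rewrite !lam_snoc. eapply reach_cons; [apply Hwrite; lia | bnd |].
      apply (move_phase _ Right); lia.
    + split; [apply (represents_with_intro _ _ _ _ z), (weak_decomp_right _ _ _ _ _ _ _ Hw)|].
      rewrite !length_app; simpl; lia.
Qed.

Lemma simulate_step M c al be : represents_with M c al be ->
  exists m M' al' be',
    1 <= m <= 13 * 5 ^ tape_size al be /\
    reach (5 ^ (tape_size al be + 2)) M m M' /\
    represents_with M' (tm_step c) al' be' /\
    tape_size al' be' <= S (tape_size al be).
Proof.
  intros HR. set (N := tape_size al be).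
  assert (HN6 : 6 <= N) by (unfold N, tape_size; lia).
  assert (Hwr : 13596 < 5 ^ N)
    by (apply Nat.lt_le_trans with (5 ^ 6); [apply Nat.ltb_lt; reflexivity | apply pow5_le; lia]).
  assert (Hwl : 167 < 5 ^ N)
    by (apply Nat.lt_le_trans with (5 ^ 6); [apply Nat.ltb_lt; reflexivity | apply pow5_le; lia]).
  assert (H25 : 25 <= 5 ^ N) by (apply (pow5_le 2); lia).
  assert (HB : 5 ^ (N + 2) = 25 * 5 ^ N) by (rewrite Nat.pow_add_r; simpl (5 ^ 2); lia).
  assert (Hsmall : forall l, length l <= N -> lam l < 5 ^ N /\ rho l < 5 ^ N).
  { intros l Hl. pose proof (pow5_le _ _ Hl). pose proof (lam_lt l). pose proof (rho_lt l). lia. }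
  rewrite (represents_with_mk _ _ _ _ HR). destruct HR as (Hw & _).
  destruct c as [u T h]. cbn [ctape chead cstate] in *.
  pose proof (sym_code_range (T h)). pose proof (state_code_le u).
  destruct (Hsmall al) as [Hlam _]; [unfold N, tape_size; lia|].
  destruct (Hsmall be) as [_ Hrho]; [unfold N, tape_size; lia|].
  destruct (insert_left (5 ^ (N + 2)) T h al be (sym_code (T h)) (state_code u) (rho be) M Hw)
    as (i & al1 & Hi & Hal1 & Hlen1 & Hw1 & Hr1); try lia.
  destruct (Hsmall al1) as [Hlam1 _]; [unfold N, tape_size in *; lia|].
  destruct (insert_right (5 ^ (N + 2)) T h al1 be (sym_code (T h)) (state_code u) (lam al1) M Hw1)
    as (j & be1 & Hj & Hbe1 & Hlen2 & Hw2 & Hr2); try (apply lam_pos; assumption); try lia.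
  destruct (Hsmall be1) as [_ Hrho1]; [unfold N, tape_size in *; lia|].
  destruct (exists_last Hal1) as (al2 & y & ->). destruct be1 as [|z be2]; [congruence|].
  destruct (write_move_step (5 ^ (N + 2)) u T h al2 y z be2 M Hw2)
    as (m & M' & al' & be' & Hm & Hr3 & HR' & Hlen3 & Hlen4); [lia|].
  exists (i + j + m), M', al', be'. split; [lia|]. split.
  - exact (reach_trans _ _ _ _ _ _ (reach_trans _ _ _ _ _ _ Hr1 Hr2) Hr3).
  - split; [exact HR'|]. unfold N, tape_size in *. lia.
Qed.

(** * Iterating the cycle *)

Lemma chain_choice {A : Type} (P : nat -> A -> Prop) (R : A -> A -> Prop) (a0 : A) :
  P 0 a0 -> (forall k a, P k a -> exists a', P (S k) a' /\ R a a') ->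
  exists f : nat -> A, f 0 = a0 /\ forall k, P k (f k) /\ R (f k) (f (S k)).
Proof.
  intros H0 Hstep.
  assert (Htot : forall ka : nat * A, exists a',
             P (fst ka) (snd ka) -> P (S (fst ka)) a' /\ R (snd ka) a').
  { intros [k a]. destruct (classic (P k a)) as [Hp | Hn].
    - destruct (Hstep k a Hp) as [a' Ha']. now exists a'.
    - exists a0. intros Hp. contradiction. }
  destruct (functional_choice _ Htot) as [next Hnext].
  set (f := fix f k := match k with 0 => a0 | S k => next (k, f k) end).
  assert (HP : forall k, P k (f k)).
  { induction k as [|k IH]; [exact H0|]. exact (proj1 (Hnext (k, f k) IH)). }
  exists f. split; [reflexivity|]. intros k. split; [apply HP|].
  exact (proj2 (Hnext (k, f k) (HP k))).
Qed.

Definition simulated (M0 : marking) (c0 : config) (A k : nat) (s : nat * list sym * list sym)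
  : Prop :=
  let '(n, al, be) := s in
  exists M, reach (5 ^ (A + k + 2)) M0 n M /\ represents_with M (tm_iter k c0) al be /\
            tape_size al be <= A + k /\ n <= 13 * 5 ^ A * k * 5 ^ k.

Lemma simulated_init M0 c0 al be : represents_with M0 c0 al be ->
  simulated M0 c0 (tape_size al be) 0 (0, al, be).
Proof.
  intros HR. exists M0. split; [|split; [exact HR | split; lia]].
  apply (reach_mono (5 ^ tape_size al be)); [apply pow5_le; lia|].
  now apply reach_refl, (represents_with_bounded _ c0).
Qed.

Lemma simulated_step M0 c0 A k s : simulated M0 c0 A k s ->
  exists s', simulated M0 c0 A (S k) s' /\ fst (fst s) < fst (fst s').
Proof.
  destruct s as [[n al] be]. intros (M & Hr & HR & Hsize & Htime).
  destruct (simulate_step _ _ _ _ HR) as (m & M' & al' & be' & Hm & Hr' & HR' & Hsize').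
  assert (HP : 5 ^ tape_size al be <= 5 ^ A * 5 ^ k)
    by (rewrite <- Nat.pow_add_r; apply pow5_le; lia).
  exists (n + m, al', be'). split; [|simpl; lia].
  exists M'. split; [|split; [exact HR' | split; [lia|]]].
  - apply reach_trans with M; (eapply reach_mono; [|eassumption]); apply pow5_le; lia.
  - rewrite Nat.pow_succ_r'. nia.
Qed.

Theorem theorem1 :
  forall (c0 : config) (M0 : marking),
    represents M0 c0 ->
    (* the run of UPN(14,29) from M0 never halts *)
    (forall j : nat, dipn_run UPN M0 j <> None) /\
    exists n : nat -> nat,
      n 0%nat = 0%nat /\
      (forall k : nat, (n k < n (S k))%nat) /\
      (forall k : nat, exists M : marking,
          dipn_run UPN M0 (n k) = Some M /\ represents M (tm_iter k c0)) /\
      (* time: n_k = O(k * 5^k) *)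
      (exists C : nat, forall k : nat, (n k <= C * k * 5 ^ k)%nat) /\
      (* space: O(k) base-5 digits in every place during the first n_k firings *)
      (exists C : nat, forall k : nat, (1 <= k)%nat ->
          forall (j : nat) (M : marking), (j <= n k)%nat ->
            dipn_run UPN M0 j = Some M ->
            forall p : nat, (1 <= p <= 14)%nat -> (M p < 5 ^ (C * k))%nat).
Proof.
  intros c0 M0 (al0 & be0 & HR0). set (A := tape_size al0 be0).
  destruct (chain_choice (simulated M0 c0 A) (fun s s' => fst (fst s) < fst (fst s'))
              (0, al0, be0) (simulated_init _ _ _ _ HR0) (simulated_step M0 c0 A))
    as (f & Hf0 & Hf).
  set (n k := fst (fst (f k))).
  assert (Hsim : forall k, exists M al be, reach (5 ^ (A + k + 2)) M0 (n k) M /\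
             represents_with M (tm_iter k c0) al be /\ n k <= 13 * 5 ^ A * k * 5 ^ k).
  { intros k. destruct (Hf k) as [Hk _]. unfold n. destruct (f k) as [[nk al] be].
    destruct Hk as (M & Hr & HR & _ & Ht). now exists M, al, be. }
  assert (Hincr : forall k, n k < n (S k)) by (intros k; apply (Hf k)).
  assert (Hge : forall k, k <= n k) by (induction k; [lia | specialize (Hincr k); lia]).
  split.
  { intros j. destruct (Hsim j) as (M & _ & _ & [Hr _] & _ & _).
    apply (run_defined_prefix _ _ _ (n j - j)).
    replace (j + (n j - j)) with (n j) by (specialize (Hge j); lia). now rewrite Hr. }
  exists n. split; [unfold n; now rewrite Hf0|]. split; [exact Hincr|]. split.
  { intros k. destruct (Hsim k) as (M & al & be & [Hr _] & HR & _).
    exists M. split; [exact Hr | now exists al, be]. }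
  split; [exists (13 * 5 ^ A); intros k; now destruct (Hsim k) as (M & al & be & _ & _ & Ht)|].
  exists (A + 3). intros k Hk j M Hj Hrun p Hp.
  destruct (Hsim k) as (M' & al & be & [_ Hbnd] & _ & _).
  specialize (Hbnd j M Hj Hrun p Hp).
  assert (5 ^ (A + k + 2) <= 5 ^ ((A + 3) * k)) by (apply pow5_le; nia). lia.
Qed.
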